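(* Let $(\alpha,\beta)\in\Delta_K$, $(\alpha_n,\beta_n)=T^n(\alpha,\beta)$, $\varepsilon_n=\varepsilon(\alpha_n,\beta_n)$, $n\ge0$, and let $\varphi_n:\mathbb{R}^3\to\mathbb{R}^3$, $\varphi_n(\bar{\bar x})=L_{\varepsilon_n}^{-1}\bar{\bar x}$. Let $c_n=\frac{1}{1-\beta_n}$ if $\varepsilon_n\in\{(1,2),(0,2)\}$, $c_n=\frac{1}{1-\alpha_n}$ if $\varepsilon_n\in\{(2,1),(0,1)\}$, and $c_n=\frac{1}{\alpha_n+\beta_n}$ if $\varepsilon_n\in\{(1,0),(2,0)\}$. Then for all $\bar{\bar x}\in\mathbb{R}^3$, \[ \langle\varphi_n\bar{\bar x},\bar{\bar\nu}(\alpha_n,\beta_n)\rangle=\frac{1}{c_n}\langle\bar{\bar x},\bar{\bar\nu}(\alpha_{n+1},\beta_{n+1})\rangle . \]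
   Context: Let $K\subset\mathbb{R}$ be a real cubic number field, $N=N_{K/\mathbb{Q}}$ its norm. Fix $r=p/q$ with $p,q$ positive coprime integers and $3\nmid p$. Let $\Delta_K=\{(\alpha,\beta)\in K^2:\ 1,\alpha,\beta \text{ linearly independent over }\mathbb{Q},\ \alpha,\beta>0,\ \alpha+\beta<1\}$ and $Ind=\{(i,j): i,j\in\{0,1,2\},\ i\neq j\}$. Let $\Delta=\{(x,y)\in\mathbb{R}^2: x,y\ge 0,\ x+y\le 1\}$ and $\triangle(1,2)=\{(x,y)\in\Delta: x\ge y\}$, $\triangle(2,1)=\{x\le y\}$, $\triangle(0,1)=\{2x+y-1\le 0\}$, $\triangle(1,0)=\{2x+y-1\ge 0\}$, $\triangle(0,2)=\{x+2y-1\le0\}$, $\triangle(2,0)=\{x+2y-1\ge 0\}$ (all subsets of $\Delta$). Maps $T_{(i,j)}:\triangle(i,j)\to\Delta$: $T_{(1,2)}(x,y)=(\frac{x-y}{1-y},\frac{y}{1-y})$, $T_{(2,1)}(x,y)=(\frac{x}{1-x},\frac{y-x}{1-x})$, $T_{(0,1)}(x,y)=(\frac{x}{1-x},\frac{y}{1-x})$, $T_{(1,0)}(x,y)=(\frac{2x+y-1}{x+y},\frac{y}{x+y})$, $T_{(0,2)}(x,y)=(\frac{x}{1-y},\frac{y}{1-y})$, $T_{(2,0)}(x,y)=(\frac{x}{x+y},\frac{x+2y-1}{x+y})$. For $(\alpha,\beta)\in\Delta_K$ put $\gamma=1-\alpha-\beta$ and $v_{\{1,2\}}=\frac{\alpha^r\beta^r}{|N(\alpha)N(\beta)|}$,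 $v_{\{0,1\}}=\frac{\alpha^r\gamma^r}{|N(\alpha)N(\gamma)|}$, $v_{\{0,2\}}=\frac{\beta^r\gamma^r}{|N(\beta)N(\gamma)|}$; the maximum is attained at a unique pair $\{i_0,j_0\}$. $\varepsilon(\alpha,\beta)$ is the ordered pair $(i,j)\in Ind$ with $\{i,j\}=\{i_0,j_0\}$ and $(\alpha,\beta)\in\triangle(i,j)$, and $T(\alpha,\beta)=T_{\varepsilon(\alpha,\beta)}(\alpha,\beta)$ (a map $\Delta_K\to\Delta_K$). For $(i,j)\in Ind$, $M_{(i,j)}=(m_{k\ell})_{0\le k,\ell\le2}$ with $m_{k\ell}=1$ if $k=\ell$ or $(k,\ell)=(i,j)$, and $0$ otherwise; and $L_{(i,j)}:=M_{(j,i)}$. For $(\alpha,\beta)\in\Delta_K$, $\bar{\bar\nu}(\alpha,\beta)={}^t(1-\alpha-\beta,\alpha,\beta)$; $\langle\cdot,\cdot\rangle$ is the standard inner product on $\mathbb{R}^3$. *)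

From mathcomp Require Import all_boot all_order all_algebra.
From mathcomp Require Import reals exp.
Set Implicit Arguments. Unset Strict Implicit. Unset Printing Implicit Defensive.
Import Order.TTheory GRing.Theory Num.Theory.
Local Open Scope ring_scope.

Section Defs.
Variable R : realType.

Definition is_Qbasis (K : R -> Prop) (b : 'I_3 -> R) : Prop :=
  (forall i, K (b i)) /\
  (forall x, K x -> exists c : 'I_3 -> rat, x = \sum_i ratr (c i) * b i) /\
  (forall c : 'I_3 -> rat, \sum_i ratr (c i) * b i = 0 -> forall i, c i = 0).

Definition real_cubic_field (K : R -> Prop) : Prop :=
  K 0 /\ K 1 /\
  (forall x y, K x -> K y -> K (x - y)) /\
  (forall x y, K x -> K y -> K (x * y)) /\
  (forall x, K x -> x != 0 -> K x^-1) /\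
  exists b, is_Qbasis K b.

(* N is the field norm N_{K/Q}: determinant of multiplication by x
   in a Q-basis of K (independent of the basis) *)
Definition is_norm (K : R -> Prop) (N : R -> R) : Prop :=
  forall b, is_Qbasis K b -> forall x, K x ->
  forall M : 'M[rat]_3,
    (forall j, x * b j = \sum_i ratr (M i j) * b i) -> N x = ratr (\det M).

Definition in_DeltaK (K : R -> Prop) (ab : R * R) : Prop :=
  let: (a, b) := ab in
  K a /\ K b /\
  (forall u v w : rat, ratr u + ratr v * a + ratr w * b = 0 ->
     [/\ u = 0, v = 0 & w = 0]) /\
  0 < a /\ 0 < b /\ a + b < 1.

End Defs.

Inductive ind := I12 | I21 | I01 | I10 | I02 | I20.

Definition ind_pair (e : ind) : nat * nat :=
  match e with
  | I12 => (1, 2)%N | I21 => (2, 1)%N | I01 => (0, 1)%N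
  | I10 => (1, 0)%N | I02 => (0, 2)%N | I20 => (2, 0)%N
  end.

Definition Mmx (R : realType) (ij : nat * nat) : 'M[R]_3 :=
  \matrix_(k < 3, l < 3)
    (((k : nat) == l) || (((k : nat) == ij.1) && ((l : nat) == ij.2)))%:R.

Definition Lmx (R : realType) (e : ind) : 'M[R]_3 :=
  Mmx R ((ind_pair e).2, (ind_pair e).1).

Section Dyn.
Variable R : realType.

Definition vpair (N : R -> R) (r : R) (x y : R) : R :=
  x `^ r * y `^ r / `|N x * N y|.

(* epsilon(alpha, beta); the maximal pair is unique on Delta_K (paper) *)
Definition eps (N : R -> R) (r : R) (ab : R * R) : ind :=
  let: (a, b) := ab in
  let g := 1 - a - b in
  let v12 := vpair N r a b in
  let v01 := vpair N r a g in
  let v02 := vpair N r b g in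
  if (v01 <= v12) && (v02 <= v12) then (if b <= a then I12 else I21)
  else if v02 <= v01 then (if 2 * a + b - 1 <= 0 then I01 else I10)
  else (if a + 2 * b - 1 <= 0 then I02 else I20).

Definition Tmap (e : ind) (ab : R * R) : R * R :=
  let: (x, y) := ab in
  match e with
  | I12 => ((x - y) / (1 - y), y / (1 - y))
  | I21 => (x / (1 - x), (y - x) / (1 - x))
  | I01 => (x / (1 - x), y / (1 - x))
  | I10 => ((2 * x + y - 1) / (x + y), y / (x + y))
  | I02 => (x / (1 - y), y / (1 - y))
  | I20 => (x / (x + y), (x + 2 * y - 1) / (x + y))
  end.

Definition T (N : R -> R) (r : R) (ab : R * R) : R * R :=
  Tmap (eps N r ab) ab.

Definition cst (e : ind) (ab : R * R) : R :=
  let: (a, b) := ab in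
  match e with
  | I12 | I02 => (1 - b)^-1
  | I21 | I01 => (1 - a)^-1
  | I10 | I20 => (a + b)^-1
  end.

Definition nu (ab : R * R) : 'cV[R]_3 :=
  \col_(k < 3) [:: 1 - ab.1 - ab.2; ab.1; ab.2]`_k.

Definition dot3 (u v : 'cV[R]_3) : R := \sum_(k < 3) u k 0 * v k 0.

End Dyn.

(** Once the point lies in the open simplex, the identity is a
    rational-function identity in [a] and [b]: inverting [L_e] is an elementary
    row operation and the denominators [1 - b], [1 - a], [a + b] of the
    branches of [T] do not vanish.  The orbit stays in the open simplex because
    each branch maps the interior of its region [triangle(e)] onto the interior
    of the simplex, and the boundary of [triangle(e)] inside the simplex is a
    rational line ([a = b], [2a + b = 1] or [a + 2b = 1]), which [(a, b)] avoids
    while [1, a, b] are linearly independent over [Q].  This independence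
    propagates along the orbit since each branch is a rational projective
    change of coordinates. *)
From mathcomp Require Import all_boot all_order all_algebra.
From mathcomp Require Import reals exp.
From mathcomp Require Import ring lra.
Set Implicit Arguments. Unset Strict Implicit. Unset Printing Implicit Defensive.
Import Order.TTheory GRing.Theory Num.Theory.
Local Open Scope ring_scope.

Section Simplex.
Variable R : realType.

Definition Qfree (a b : R) : Prop :=
  forall u v w : rat, ratr u + ratr v * a + ratr w * b = 0 ->
    [/\ u = 0, v = 0 & w = 0].

Definition open_simplex (ab : R * R) : Prop :=
  0 < ab.1 /\ 0 < ab.2 /\ ab.1 + ab.2 < 1.

Lemma ratr_two : ratr (2 : rat) = 2 :> R.
Proof. exact: (rmorph_nat (@ratr R) 2). Qed.

Lemma Qfree_neq (a b : R) : Qfree a b -> a != b.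
Proof.
move=> hfree; apply/eqP => eq_ab.
have rel : ratr 0 + ratr 1 * a + ratr (-1) * b = 0 :> R.
  by rewrite rmorph0 rmorph1 rmorphN eq_ab; ring.
by have [_ /eqP] := hfree _ _ _ rel; rewrite oner_eq0.
Qed.

Lemma Qfree_neq_median (a b : R) :
  Qfree a b -> 2 * a + b - 1 != 0 /\ a + 2 * b - 1 != 0.
Proof.
move=> hfree; split; apply/eqP => eq0.
- have rel : ratr (-1) + ratr 2 * a + ratr 1 * b = 0 :> R.
    by rewrite rmorphN rmorph1 ratr_two; lra.
  by have [/eqP] := hfree _ _ _ rel; rewrite oppr_eq0 oner_eq0.
- have rel : ratr (-1) + ratr 1 * a + ratr 2 * b = 0 :> R.
    by rewrite rmorphN rmorph1 ratr_two; lra.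
  by have [/eqP] := hfree _ _ _ rel; rewrite oppr_eq0 oner_eq0.
Qed.

(* [f] gives the coefficients, in the basis [1, a, b], of [d] times a rational
   relation between [1, a', b']. *)
Lemma Qfree_transfer (a b a' b' d : R) (f : rat -> rat -> rat -> rat * rat * rat) :
  d != 0 ->
  (forall u v w : rat, [/\ (f u v w).1.1 = 0, (f u v w).1.2 = 0 & (f u v w).2 = 0] ->
     [/\ u = 0, v = 0 & w = 0]) ->
  (forall u v w : rat, ratr (f u v w).1.1 + ratr (f u v w).1.2 * a + ratr (f u v w).2 * b
      = d * (ratr u + ratr v * a' + ratr w * b')) ->
  Qfree a b -> Qfree a' b'.
Proof. by move=> hd hf E hfree u v w H; apply: hf; apply: hfree; rewrite E H mulr0. Qed.

Lemma Qfree_Tmap (e : ind) (ab : R * R) :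
  open_simplex ab -> Qfree ab.1 ab.2 -> Qfree (Tmap e ab).1 (Tmap e ab).2.
Proof.
case: ab => a b; rewrite /open_simplex /= => -[ha [hb hab]].
have h1 : 1 - a != 0 by apply: lt0r_neq0; lra.
have h2 : 1 - b != 0 by apply: lt0r_neq0; lra.
have h3 : a + b != 0 by apply: lt0r_neq0; lra.
pose rw := (rmorphB, rmorphD, rmorphN, rmorphM, rmorph1, ratr_two).
case: e => /=;
  [ apply: (@Qfree_transfer _ _ _ _ (1 - b) (fun u v w => (u, v, w - u - v)))
  | apply: (@Qfree_transfer _ _ _ _ (1 - a) (fun u v w => (u, v - u - w, w)))
  | apply: (@Qfree_transfer _ _ _ _ (1 - a) (fun u v w => (u, v - u, w)))
  | apply: (@Qfree_transfer _ _ _ _ (a + b) (fun u v w => (- v, u + 2 * v, u + v + w)))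
  | apply: (@Qfree_transfer _ _ _ _ (1 - b) (fun u v w => (u, v, w - u)))
  | apply: (@Qfree_transfer _ _ _ _ (a + b) (fun u v w => (- w, u + v + w, u + 2 * w))) ];
  by move=> // u v w /=; first [case=> *; split; lra | rewrite !rw; field].
Qed.

Lemma open_simplex_div (x y d : R) :
  0 < x -> 0 < y -> x + y < d -> open_simplex (x / d, y / d).
Proof.
move=> hx hy hxy; have hd : 0 < d by lra.
by rewrite /open_simplex /= !divr_gt0 // -mulrDl ltr_pdivrMr // mul1r.
Qed.

Lemma T_open_simplex (N : R -> R) (r : R) (ab : R * R) :
  open_simplex ab -> Qfree ab.1 ab.2 -> open_simplex (T N r ab).
Proof.
case: ab => a b [/= ha [hb hab]] hfree.
have neq_ab := Qfree_neq hfree.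
have [neq01 neq02] := Qfree_neq_median hfree.
rewrite /T /eps; case: ifP => _; last case: ifP => _; case: lerP => hcase /=;
  apply: open_simplex_div; lra.
Qed.

Lemma T_orbit_invariant (N : R -> R) (r : R) (ab : R * R) (m : nat) :
  open_simplex ab -> Qfree ab.1 ab.2 ->
  open_simplex (iter m (T N r) ab) /\ Qfree (iter m (T N r) ab).1 (iter m (T N r) ab).2.
Proof.
move=> hsimp hfree; elim: m => [|m [IHsimp IHfree]] //=.
by split; [exact: T_open_simplex | exact: Qfree_Tmap].
Qed.

Definition Linv (e : ind) : 'M[R]_3 :=
  \matrix_(k < 3, l < 3)
    (((k : nat) == l)%:R - (((k : nat) == (ind_pair e).2) && ((l : nat) == (ind_pair e).1))%:R).

Lemma Lmx_mulmx_Linv (e : ind) : Lmx R e *m Linv e = 1%:M.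
Proof.
apply/matrixP => k l; rewrite !mxE !big_ord_recr big_ord0 /= !mxE.
by case: k => [[|[|[|k]]] hk] //; case: l => [[|[|[|l]]] hl] //; case: e => /=; ring.
Qed.

Lemma invmx_Lmx (e : ind) : invmx (Lmx R e) = Linv e.
Proof.
have [unitL _] := mulmx1_unit (Lmx_mulmx_Linv e).
by rewrite -[invmx _]mulmx1 -(Lmx_mulmx_Linv e) mulmxA mulVmx // mul1mx.
Qed.

Lemma dot3_invmx_Lmx_nu (e : ind) (ab : R * R) (x : 'cV[R]_3) :
  open_simplex ab ->
  dot3 (invmx (Lmx R e) *m x) (nu ab) = (cst e ab)^-1 * dot3 x (nu (Tmap e ab)).
Proof.
case: ab => a b [/= ha [hb hab]].
have h1 : 1 - a != 0 by apply: lt0r_neq0; lra.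
have h2 : 1 - b != 0 by apply: lt0r_neq0; lra.
have h3 : a + b != 0 by apply: lt0r_neq0; lra.
rewrite invmx_Lmx /dot3 /nu; case: e => /=; rewrite invrK;
  do 3! rewrite ?big_ord_recr ?big_ord0 /= ?mxE /=; field; by rewrite ?h1 ?h2 ?h3.
Qed.

End Simplex.

Theorem lemma5p3 (R : realType) (K : R -> Prop) (N : R -> R) (p q : nat)
  (alpha beta : R) (n : nat) (x : 'cV[R]_3) :
  real_cubic_field K -> is_norm K N ->
  (0 < p)%N -> (0 < q)%N -> coprime p q -> ~~ (3 %| p)%N ->
  in_DeltaK K (alpha, beta) ->
  let r : R := p%:R / q%:R in
  let s : nat -> R * R := fun m => iter m (T N r) (alpha, beta) in
  let e := eps N r (s n) in
  dot3 (invmx (Lmx R e) *m x) (nu (s n))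
    = (cst e (s n))^-1 * dot3 x (nu (s n.+1)).
Proof.
move=> _ _ _ _ _ _ [_ [_ [hfree hsimp]]] r s e.
have [hsimp_n _] := @T_orbit_invariant R N r (alpha, beta) n hsimp hfree.
have -> : s n.+1 = Tmap e (s n) by rewrite /s iterS.
exact: dot3_invmx_Lmx_nu.
Qed.
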